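(* Let $C$ be the middle-thirds Cantor set. For every $K<\infty$ and $n\in\mathbb{N}$ let \[ S_n^{(K)}:=\{p/q\in C:\ \gcd(p,q)=1,\ 3^{n-1}\le q<3^n,\ P(p/q)\le K\log q\}. \] Then for every $\varepsilon_1>0$ we have $\#(S_n^{(K)})=O\big(2^{n(1+\varepsilon_1)}\big)$ as $n\to\infty$.
   Context: $C=\{x\in[0,1]: x=\sum_{i\ge1}a_i3^{-i}\text{ with all }a_i\in\{0,2\}\}$. For a rational number $p/q$, its period $P(p/q)$ is the (minimal) period of the eventually periodic part of its ternary expansion. $\log$ is the natural logarithm; $p\in\mathbb{Z}$, $q\in\mathbb{N}$. *)

From Stdlib Require Import Reals Lra Lia ZArith Arith List.
Open Scope R_scope.

Definition in_cantor (x : R) : Prop :=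
  exists a : nat -> nat,
    (forall i, a i = 0%nat \/ a i = 2%nat) /\
    infinite_sum (fun i => INR (a (S i)) / 3 ^ (S i)) x.

(* i-th ternary digit (i >= 1) of p/q : floor(3^i p / q) mod 3. *)
Definition tdigit (p : Z) (q : nat) (i : nat) : Z :=
  Z.modulo (Z.div (p * 3 ^ Z.of_nat i) (Z.of_nat q)) 3.

Definition is_eperiod (p : Z) (q : nat) (T : nat) : Prop :=
  (1 <= T)%nat /\
  exists N : nat, forall i : nat, (1 <= i)%nat -> (N <= i)%nat ->
    tdigit p q (i + T) = tdigit p q i.

Definition is_period (p : Z) (q : nat) (T : nat) : Prop :=
  is_eperiod p q T /\ forall T', is_eperiod p q T' -> (T <= T')%nat.

Definition in_S (K : R) (n : nat) (pq : Z * nat) : Prop :=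
  let (p, q) := pq in
  in_cantor (IZR p / INR q) /\
  Z.gcd p (Z.of_nat q) = 1%Z /\
  (3 ^ (n - 1) <= q < 3 ^ n)%nat /\
  exists T : nat, is_period p q T /\ INR T <= K * ln (INR q).

From Stdlib Require Import Reals ZArith Arith List.
From Stdlib Require Import Lra Lia Classical.
Open Scope R_scope.

(* A reduced fraction p/q in S_n^(K) is determined by two data:
   - its first n ternary digits, all in {0,2} since p/q lies in C: two points
     of C sharing n digits are 3^(-n)-close, whereas distinct fractions with
     the same denominator q < 3^n are more than 3^(-n) apart; 2^n choices.
   - its denominator q.  An eventual period T of p/q forces q | 3^M (3^T - 1)
     for some M, hence q | 3^n (3^T - 1) because q < 3^n; and
     T <= K log q <= k n for any integer k >= 2K.
   Hence #S_n^(K) <= 2^n * sum_(T <= kn) d(3^n (3^T - 1)) with d the divisor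
   function.  The elementary bound d(M) <= C_j M^(1/j), for j >= 4(k+1)/eps,
   makes each term O(2^(n eps/2)), and the factor kn is O(2^(n eps/2)) too. *)

Lemma length_le_of_injective_rel {A B : Type} (R : A -> B -> Prop)
    (l : list A) (Y : list B) :
  NoDup l ->
  (forall x, In x l -> exists y, In y Y /\ R x y) ->
  (forall x x' y, In x l -> In x' l -> R x y -> R x' y -> x = x') ->
  (length l <= length Y)%nat.
Proof.
  intros Hnd; revert Y.
  induction Hnd as [|x l Hx Hnd IH]; intros Y Hex Hinj; simpl; [lia|].
  destruct (Hex x (or_introl eq_refl)) as [y [Hy Rxy]].
  destruct (in_split _ _ Hy) as [Y1 [Y2 ->]].
  assert (Hrest : (length l <= length (Y1 ++ Y2))%nat).
  { apply IH.
    - intros x' Hx'. destruct (Hex x' (or_intror Hx')) as [y' [Hy' R']].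
      apply in_app_iff in Hy'. destruct Hy' as [H|[<-|H]].
      + exists y'; split; auto; apply in_app_iff; auto.
      + exfalso. assert (x' = x) by (apply (Hinj x' x y); simpl; auto).
        subst; auto.
      + exists y'; split; auto; apply in_app_iff; auto.
    - intros; apply (Hinj x0 x' y0); simpl; auto. }
  rewrite length_app in *. simpl. lia.
Qed.

Lemma length_flat_map_le {A B : Type} (f : A -> list B) (s : list A) (Bd : R) :
  (forall x, In x s -> INR (length (f x)) <= Bd) ->
  INR (length (flat_map f s)) <= INR (length s) * Bd.
Proof.
  induction s as [|a s IH]; intros H; [simpl; lra|]. cbn [flat_map length].
  rewrite length_app, plus_INR, S_INR.
  pose proof (H a (or_introl eq_refl)).
  pose proof (IH (fun x Hx => H x (or_intror Hx))). lra.
Qed.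

Open Scope nat_scope.

Definition divisors (M : nat) : list nat :=
  filter (fun e => Nat.eqb (M mod e) 0) (seq 1 M).

Definition num_divisors (M : nat) : nat := length (divisors M).

Lemma divisors_NoDup M : NoDup (divisors M).
Proof. apply NoDup_filter, seq_NoDup. Qed.

Lemma in_divisors M e : 1 <= M -> (In e (divisors M) <-> Nat.divide e M /\ 1 <= e).
Proof.
  intros HM. unfold divisors. rewrite filter_In, in_seq, Nat.eqb_eq. split.
  - intros [H1 H2]. split; [|lia]. apply Nat.Private_NLcmProp.mod_divide; [lia|auto].
  - intros [H1 H2]. assert (e <= M) by (apply Nat.divide_pos_le; [lia|auto]).
    split; [lia|]. apply Nat.Private_NLcmProp.mod_divide; [lia|auto].
Qed.

(* d is submultiplicative: e | xy is the product of g = gcd(e, x), a divisor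
   of x, and e / g, a divisor of y. *)
Lemma num_divisors_mul_le x y : 1 <= x -> 1 <= y ->
  num_divisors (x * y) <= num_divisors x * num_divisors y.
Proof.
  intros Hx Hy. unfold num_divisors. rewrite <- length_prod.
  apply (length_le_of_injective_rel (fun e (pr : nat * nat) => e = fst pr * snd pr)).
  - apply divisors_NoDup.
  - intros e He. apply in_divisors in He; [|nia]. destruct He as [He He1].
    set (g := Nat.gcd e x).
    assert (Hg0 : g <> 0) by (unfold g; intro H; apply Nat.gcd_eq_0 in H; lia).
    destruct (Nat.gcd_divide_l e x) as [e2 He2].
    destruct (Nat.gcd_divide_r e x) as [x2 Hx2]. fold g in He2, Hx2.
    exists (g, e2). split; [|simpl; lia].
    apply in_prod_iff. split.
    + apply in_divisors; auto. split; [exists x2; auto|lia].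
    + apply in_divisors; auto. split; [|nia].
      assert (Hcop : Nat.gcd e2 x2 = 1).
      { pose proof (Nat.gcd_div_gcd e x g Hg0 eq_refl) as H.
        rewrite He2, Hx2, !Nat.div_mul in H; auto. }
      apply (Nat.gauss _ x2); auto.
      destruct He as [k Hk]. exists k.
      apply (Nat.mul_cancel_l _ _ g); auto.
      rewrite He2, Hx2 in Hk. nia.
  - intros e e' [a b] _ _; simpl; intros; subst; auto.
Qed.

Definition is_prime (p : nat) : Prop :=
  2 <= p /\ forall d, Nat.divide d p -> d = 1 \/ d = p.

Lemma is_prime_3 : is_prime 3.
Proof.
  split; [lia|]. intros d Hd. assert (d <= 3) by (apply Nat.divide_pos_le; [lia|auto]).
  destruct d as [|[|[|[|d]]]]; try lia; destruct Hd as [k Hk]; lia.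
Qed.

Lemma divide_prime_pow p a e : is_prime p -> Nat.divide e (p ^ a) ->
  exists i, i <= a /\ e = p ^ i.
Proof.
  intros [Hp2 Hp]. revert e. induction a as [|a IH]; intros e He.
  - exists 0. simpl in *. split; [lia|]. apply Nat.divide_1_r; auto.
  - destruct (classic (Nat.divide p e)) as [[e' ->]|Hn].
    + simpl in He. rewrite (Nat.mul_comm e' p) in He.
      apply Nat.mul_divide_cancel_l in He; [|lia].
      destruct (IH e' He) as [i [Hi ->]]. exists (S i). split; [lia|]. simpl; lia.
    + assert (Hcop : Nat.gcd e p = 1).
      { destruct (Hp (Nat.gcd e p) (Nat.gcd_divide_r _ _)) as [H|H]; auto.
        exfalso; apply Hn. rewrite <- H. apply Nat.gcd_divide_l. }
      simpl in He. apply Nat.gauss in He; auto.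
      destruct (IH e He) as [i [Hi ->]]. exists i; split; [lia|auto].
Qed.

Lemma num_divisors_prime_pow p a : is_prime p -> num_divisors (p ^ a) <= S a.
Proof.
  intros Hp. unfold num_divisors. rewrite <- (length_seq (S a) 0).
  assert (Hpa : 1 <= p ^ a) by (apply Nat.pow_lower_bound; destruct Hp; lia).
  apply (length_le_of_injective_rel (fun e i => e = p ^ i)).
  - apply divisors_NoDup.
  - intros e He. apply in_divisors in He; auto. destruct He as [He _].
    destruct (divide_prime_pow p a e Hp He) as [i [Hi ->]].
    exists i. split; auto. apply in_seq. lia.
  - intros; subst; auto.
Qed.

Lemma exists_prime_divisor M : 2 <= M -> exists p, is_prime p /\ Nat.divide p M.
Proof.
  induction M as [M IH] using (well_founded_induction lt_wf). intros HM.
  destruct (classic (is_prime M)) as [H|H].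
  - exists M; split; auto. apply Nat.divide_refl.
  - assert (exists d, Nat.divide d M /\ d <> 1 /\ d <> M) as [d [Hd [Hd1 HdM]]].
    { apply NNPP; intro Hc. apply H. split; auto. intros d Hd.
      destruct (classic (d = 1)); auto. destruct (classic (d = M)); auto.
      exfalso; apply Hc; eauto. }
    assert (d <= M) by (apply Nat.divide_pos_le; [lia|auto]).
    assert (d <> 0) by (intro; subst; destruct Hd; lia).
    destruct (IH d) as [p [Hp Hpd]]; try lia.
    exists p; split; auto. eapply Nat.divide_trans; eauto.
Qed.

Lemma factor_prime_power p M : is_prime p -> 1 <= M ->
  exists a m, M = p ^ a * m /\ ~ Nat.divide p m /\ 1 <= m.
Proof.
  intros Hp. induction M as [M IH] using (well_founded_induction lt_wf). intros HM.
  destruct (classic (Nat.divide p M)) as [[m ->]|Hn].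
  - destruct Hp as [Hp2 _].
    destruct (IH m) as [a [m' [E [H1 H2]]]]; try nia.
    exists (S a), m'. split; auto. simpl. rewrite E. lia.
  - exists 0, M. simpl. repeat split; auto; lia.
Qed.

Lemma num_divisors_split p a m : is_prime p -> 1 <= m ->
  num_divisors (p ^ a * m) <= S a * num_divisors m.
Proof.
  intros Hp Hm. eapply Nat.le_trans.
  - apply num_divisors_mul_le; auto. apply Nat.pow_lower_bound; destruct Hp; lia.
  - apply Nat.mul_le_mono_r, num_divisors_prime_pow; auto.
Qed.

(* (a+1)^j <= j^j 2^a: writing a < j(b+1), (a+1) <= j 2^b and jb <= a. *)
Lemma succ_pow_le j a : 1 <= j -> S a ^ j <= j ^ j * 2 ^ a.
Proof.
  intros Hj. set (b := a / j).
  assert (Ha : a < j * (b + 1)).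
  { unfold b. pose proof (Nat.div_mod a j ltac:(lia)).
    pose proof (Nat.mod_upper_bound a j ltac:(lia)). lia. }
  assert (H1 : S a <= j * 2 ^ b) by (pose proof (Nat.pow_gt_lin_r 2 b); nia).
  assert (H2 : b * j <= a) by (unfold b; rewrite Nat.mul_comm; apply Nat.Div0.mul_div_le).
  eapply Nat.le_trans; [apply Nat.pow_le_mono_l; eauto|].
  rewrite Nat.pow_mul_l. apply Nat.mul_le_mono_l.
  rewrite <- Nat.pow_mul_r. apply Nat.pow_le_mono_r; lia.
Qed.

(* If all prime factors of M are at least 2^j then d(M)^j <= M, since each
   prime power contributes (a+1)^j <= 2^(ja) <= p^a. *)
Lemma num_divisors_pow_le_large_primes j M : 1 <= M ->
  (forall p, is_prime p -> Nat.divide p M -> 2 ^ j <= p) -> num_divisors M ^ j <= M.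
Proof.
  induction M as [M IH] using (well_founded_induction lt_wf). intros HM Hf.
  destruct (Nat.eq_dec M 1) as [->|HM1]; [simpl; rewrite Nat.pow_1_l; lia|].
  destruct (exists_prime_divisor M) as [p [Hp Hpd]]; [lia|].
  destruct (factor_prime_power p M Hp HM) as [a [m [E [Hn Hm]]]].
  assert (Ha0 : a <> 0) by (intro; subst a; rewrite Nat.mul_1_l in E; subst m; auto).
  assert (Hpa : p <= p ^ a).
  { destruct a; [lia|]. simpl. pose proof (Nat.pow_lower_bound p a). destruct Hp; nia. }
  assert (IHm : num_divisors m ^ j <= m).
  { apply IH; [rewrite E; destruct Hp; nia|auto|]. intros p' Hp' Hd. apply Hf; auto.
    rewrite E. apply Nat.divide_mul_r; auto. }
  assert (Hpow : S a ^ j <= p ^ a).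
  { eapply Nat.le_trans; [apply Nat.pow_le_mono_l, (Nat.pow_gt_lin_r 2 a); lia|].
    rewrite <- Nat.pow_mul_r, Nat.mul_comm, Nat.pow_mul_r.
    apply Nat.pow_le_mono_l; auto. }
  rewrite E. eapply Nat.le_trans; [apply Nat.pow_le_mono_l, num_divisors_split; auto|].
  rewrite Nat.pow_mul_l. apply Nat.mul_le_mono; auto.
Qed.

(* Induction on the bound k below which prime factors are "small": each small
   prime p = k dividing M costs a factor j^j, since (a+1)^j <= j^j k^a. *)
Lemma num_divisors_pow_le_aux j k M : 1 <= j -> 1 <= M ->
  (forall p, is_prime p -> Nat.divide p M -> p < k \/ 2 ^ j <= p) ->
  num_divisors M ^ j <= (j ^ j) ^ k * M.
Proof.
  intros Hj. revert M. induction k as [|k IH]; intros M HM Hf.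
  - simpl. rewrite Nat.add_0_r. apply num_divisors_pow_le_large_primes; auto.
    intros p Hp Hd. destruct (Hf p Hp Hd); auto; lia.
  - assert (Hjj : 1 <= j ^ j) by (apply Nat.pow_lower_bound; lia).
    destruct (classic (is_prime k /\ k < 2 ^ j /\ Nat.divide k M)) as [[Hk [Hkj HkM]]|Hno].
    + destruct (factor_prime_power k M Hk HM) as [a [m [E [Hn Hm]]]].
      assert (IHm : num_divisors m ^ j <= (j ^ j) ^ k * m).
      { apply IH; auto. intros p' Hp' Hd.
        assert (p' <> k) by (intro; subst; auto).
        destruct (Hf p' Hp'); [rewrite E; apply Nat.divide_mul_r; auto| |]; lia. }
      assert (Ha : S a ^ j <= j ^ j * k ^ a).
      { eapply Nat.le_trans; [apply succ_pow_le; auto|].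
        apply Nat.mul_le_mono_l, Nat.pow_le_mono_l. destruct Hk; lia. }
      rewrite E. eapply Nat.le_trans; [apply Nat.pow_le_mono_l, num_divisors_split; auto|].
      rewrite Nat.pow_mul_l. simpl (_ ^ S k).
      replace (j ^ j * (j ^ j) ^ k * (k ^ a * m))
        with ((j ^ j * k ^ a) * ((j ^ j) ^ k * m)) by ring.
      apply Nat.mul_le_mono; auto.
    + eapply Nat.le_trans.
      * apply IH; auto. intros p Hp Hd. destruct (Hf p Hp Hd) as [H|H]; auto.
        destruct (Nat.eq_dec p k) as [->|]; [|lia].
        destruct (le_lt_dec (2 ^ j) k); auto. exfalso; apply Hno; auto.
      * simpl. apply Nat.mul_le_mono_r.
        assert (1 <= (j ^ j) ^ k) by (apply Nat.pow_lower_bound; lia). nia.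
Qed.

Lemma num_divisors_pow_le j : 1 <= j ->
  exists C, 1 <= C /\ forall M, 1 <= M -> num_divisors M ^ j <= C * M.
Proof.
  intros Hj. exists ((j ^ j) ^ (2 ^ j)). split.
  - apply Nat.pow_lower_bound. pose proof (Nat.pow_lower_bound j j). lia.
  - intros M HM. apply num_divisors_pow_le_aux; auto. intros p _ _. lia.
Qed.

Open Scope R_scope.

Lemma pow_lt_compat (x y : R) (j : nat) : (1 <= j)%nat -> 0 <= x < y -> x ^ j < y ^ j.
Proof.
  intros Hj Hxy. destruct j as [|j]; [lia|]. clear Hj. induction j as [|j IH].
  - simpl. lra.
  - change (x ^ S (S j)) with (x * x ^ S j). change (y ^ S (S j)) with (y * y ^ S j).
    assert (0 <= x ^ S j) by (apply pow_le; lra). nra.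
Qed.

Lemma pow_le_reg (x y : R) (j : nat) : (1 <= j)%nat -> 0 <= y -> x ^ j <= y ^ j -> x <= y.
Proof.
  intros Hj Hy H. apply Rnot_lt_le. intro Hlt.
  pose proof (pow_lt_compat y x j Hj (conj Hy Hlt)). lra.
Qed.

Lemma num_divisors_le_root (j : nat) : (1 <= j)%nat ->
  exists C, 0 <= C /\ forall (M : nat) (y : R), (1 <= M)%nat -> INR M <= Rpower 2 y ->
    INR (num_divisors M) <= C * Rpower 2 (y / INR j).
Proof.
  intros Hj. destruct (num_divisors_pow_le j Hj) as [Cj [HCj Hd]].
  assert (HC1 : 1 <= INR Cj) by (apply (le_INR 1); auto).
  assert (Hj0 : 0 < INR j) by (apply (lt_INR 0); lia).
  exists (INR Cj). split; [lra|]. intros M y HM HMy.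
  assert (Hroot : 0 < Rpower 2 (y / INR j)) by apply exp_pos.
  apply (pow_le_reg _ _ j Hj); [nra|].
  rewrite <- pow_INR, Rpow_mult_distr, <- (Rpower_pow j (Rpower 2 _)), Rpower_mult
    by exact Hroot.
  replace (y / INR j * INR j) with y by (field; lra).
  assert (Hpow : INR Cj <= INR Cj ^ j).
  { destruct j as [|j]; [lia|]. simpl. pose proof (pow_R1_Rle (INR Cj) j HC1). nra. }
  apply (Rle_trans _ (INR Cj * INR M)).
  - rewrite <- mult_INR. apply le_INR, Hd; auto.
  - apply Rmult_le_compat; try apply pos_INR; lra.
Qed.

Fixpoint digit_words (n : nat) : list (list nat) :=
  match n with
  | O => nil :: nil
  | S n => map (cons 0%nat) (digit_words n) ++ map (cons 2%nat) (digit_words n)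
  end.

Lemma digit_words_length n : length (digit_words n) = (2 ^ n)%nat.
Proof. induction n; simpl; auto. rewrite length_app, !length_map, IHn. lia. Qed.

Lemma in_digit_words n w : length w = n ->
  (forall x, In x w -> x = 0%nat \/ x = 2%nat) -> In w (digit_words n).
Proof.
  revert w; induction n as [|n IH]; intros w Hw Hx.
  - destruct w; simpl in *; auto; lia.
  - destruct w as [|x w]; simpl in Hw; [lia|]. simpl. apply in_app_iff.
    assert (In w (digit_words n)) by (apply IH; [lia|intros; apply Hx; simpl; auto]).
    destruct (Hx x (or_introl eq_refl)) as [->| ->]; [left|right]; apply in_map; auto.
Qed.

Definition cantor_digits (a : nat -> nat) : Prop := forall i, a i = 0%nat \/ a i = 2%nat.

Lemma cantor_term_diff_le (a a' : nat -> nat) (i : nat) :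
  cantor_digits a -> cantor_digits a' ->
  Rabs (INR (a i) / 3 ^ i - INR (a' i) / 3 ^ i) <= 2 / 3 ^ i.
Proof.
  intros Ha Ha'. assert (H3 : 0 < 3 ^ i) by (apply pow_lt; lra).
  unfold Rdiv. rewrite <- Rmult_minus_distr_r, Rabs_mult.
  rewrite (Rabs_right (/ 3 ^ i)) by (left; apply Rinv_0_lt_compat; lra).
  apply Rmult_le_compat_r; [left; apply Rinv_0_lt_compat; lra|].
  apply Rabs_le. destruct (Ha i) as [-> | ->], (Ha' i) as [-> | ->]; simpl; lra.
Qed.

(* Partial sums of the termwise difference of two Cantor expansions agreeing
   on the first n digits: the terms vanish up to n and are bounded by
   2/3^(i+1) afterwards, a geometric tail. *)
Lemma cantor_partial_diff_le (a a' : nat -> nat) (n : nat) :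
  cantor_digits a -> cantor_digits a' ->
  (forall i, (1 <= i <= n)%nat -> a i = a' i) ->
  forall N, sum_f_R0 (fun i => Rabs (INR (a (S i)) / 3 ^ S i - INR (a' (S i)) / 3 ^ S i)) N
    <= / 3 ^ n - / 3 ^ Nat.max n (S N).
Proof.
  intros Ha Ha' Heq.
  set (t := fun i => Rabs (INR (a (S i)) / 3 ^ S i - INR (a' (S i)) / 3 ^ S i)).
  assert (Hbig : forall i, t i <= 2 / 3 ^ S i) by (intro; apply cantor_term_diff_le; auto).
  assert (Hzero : forall i, (S i <= n)%nat -> t i = 0).
  { intros i Hi. unfold t. rewrite Heq by lia. rewrite Rminus_diag, Rabs_R0. auto. }
  induction N as [|N IH].
  - simpl sum_f_R0. destruct n as [|n].
    + simpl Nat.max. pose proof (Hbig 0%nat). simpl in *. lra.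
    + rewrite Hzero by lia. rewrite Nat.max_l by lia. lra.
  - rewrite tech5. destruct (le_lt_dec (S (S N)) n).
    + rewrite Hzero by lia. rewrite Nat.max_l by lia.
      rewrite Nat.max_l in IH by lia. lra.
    + rewrite Nat.max_r by lia. rewrite Nat.max_r in IH by lia.
      pose proof (Hbig (S N)).
      replace (3 ^ S (S N)) with (3 * 3 ^ S N) in * by (simpl; ring).
      assert (0 < 3 ^ S N) by (apply pow_lt; lra).
      unfold Rdiv in *. rewrite Rinv_mult in *. lra.
Qed.

Lemma cantor_prefix_close (a a' : nat -> nat) (x x' : R) (n : nat) :
  cantor_digits a -> cantor_digits a' ->
  (forall i, (1 <= i <= n)%nat -> a i = a' i) ->
  infinite_sum (fun i => INR (a (S i)) / 3 ^ S i) x ->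
  infinite_sum (fun i => INR (a' (S i)) / 3 ^ S i) x' ->
  Rabs (x - x') <= / 3 ^ n.
Proof.
  intros Ha Ha' Heq Hx Hx'.
  apply Rnot_lt_le. intro Hlt.
  set (e := (Rabs (x - x') - / 3 ^ n) / 3).
  assert (He : e > 0) by (unfold e; lra).
  destruct (Hx e He) as [N1 H1]. destruct (Hx' e He) as [N2 H2].
  set (N := Nat.max N1 N2).
  specialize (H1 N ltac:(lia)). specialize (H2 N ltac:(lia)). unfold R_dist in *.
  set (s := sum_f_R0 (fun i => INR (a (S i)) / 3 ^ S i) N) in *.
  set (s' := sum_f_R0 (fun i => INR (a' (S i)) / 3 ^ S i) N) in *.
  assert (Hss : Rabs (s - s') <= / 3 ^ n).
  { unfold s, s'. rewrite <- minus_sum.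
    eapply Rle_trans; [apply sum_f_R0_triangle|].
    eapply Rle_trans; [apply (cantor_partial_diff_le a a' n Ha Ha' Heq N)|].
    assert (0 < / 3 ^ Nat.max n (S N)) by (apply Rinv_0_lt_compat, pow_lt; lra). lra. }
  assert (Rabs (x - x') <= Rabs (s - x) + Rabs (s' - x') + Rabs (s - s')).
  { replace (x - x') with (-(s - x) + (s' - x') + (s - s')) by ring.
    eapply Rle_trans; [apply Rabs_triang|]. apply Rplus_le_compat_r.
    eapply Rle_trans; [apply Rabs_triang|]. rewrite Rabs_Ropp. lra. }
  unfold e in *. lra.
Qed.

Lemma same_denominator_close_eq (p p' : Z) (q n : nat) : (1 <= q)%nat -> (q < 3 ^ n)%nat ->
  Rabs (IZR p / INR q - IZR p' / INR q) <= / 3 ^ n -> p = p'.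
Proof.
  intros Hq Hqn H. destruct (Z.eq_dec p p') as [|Hne]; auto. exfalso.
  assert (Hq0 : 1 <= INR q) by (apply (le_INR 1); auto).
  assert (Hqn' : INR q < 3 ^ n).
  { replace 3 with (INR 3) by (simpl; lra). rewrite <- pow_INR. apply lt_INR; auto. }
  replace (IZR p / INR q - IZR p' / INR q) with (IZR (p - p') * / INR q) in H
    by (rewrite minus_IZR; field; lra).
  rewrite Rabs_mult, Rabs_Zabs, Rabs_right in H by (left; apply Rinv_0_lt_compat; lra).
  assert (1 <= IZR (Z.abs (p - p'))) by (apply IZR_le; lia).
  assert (/ 3 ^ n < / INR q) by (apply Rinv_lt_contravar; nra).
  assert (0 < / INR q) by (apply Rinv_0_lt_compat; lra). nra.
Qed.

Open Scope Z_scope.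

Definition remainder (p : Z) (q : nat) (i : nat) : Z := (p * 3 ^ Z.of_nat i) mod Z.of_nat q.

Lemma remainder_step p q i : (1 <= q)%nat ->
  remainder p q (S i) = 3 * remainder p q i - Z.of_nat q * tdigit p q (S i) /\
  0 <= remainder p q i < Z.of_nat q.
Proof.
  intros Hq. unfold remainder, tdigit. set (Q := Z.of_nat q). assert (HQ : 0 < Q) by lia.
  set (X := p * 3 ^ Z.of_nat i).
  assert (E : p * 3 ^ Z.of_nat (S i) = Q * (3 * (X / Q)) + 3 * (X mod Q)).
  { rewrite Nat2Z.inj_succ, Z.pow_succ_r by lia.
    pose proof (Z.div_mod X Q ltac:(lia)). unfold X in *. nia. }
  pose proof (Z.mod_pos_bound X Q HQ) as Hr.
  rewrite E. split; [|lia].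
  assert (Hc : 0 <= 3 * (X mod Q) / Q < 3).
  { split; [apply Z.div_pos; lia|apply Z.div_lt_upper_bound; lia]. }
  assert (D1 : (3 * (X / Q) * Q + 3 * (X mod Q)) / Q = 3 * (X / Q) + 3 * (X mod Q) / Q)
    by (apply Z.div_add_l; lia).
  assert (M1 : (3 * (X / Q) * Q + 3 * (X mod Q)) mod Q = (3 * (X mod Q)) mod Q)
    by (rewrite Z.add_comm; apply Z.mod_add; lia).
  assert (M2 : (3 * (X / Q) + 3 * (X mod Q) / Q) mod 3 = 3 * (X mod Q) / Q).
  { rewrite Z.add_comm, (Z.mul_comm 3 (X / Q)), Z.mod_add by lia. apply Z.mod_small; lia. }
  rewrite (Z.mul_comm Q), D1, M1, M2, (Z.mod_eq (3 * (X mod Q)) Q) by lia. ring.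
Qed.

(* Eventually periodic digits force eventually periodic remainders: the
   difference u_k = r_(M+k+T) - r_(M+k) satisfies u_(k+1) = 3 u_k and
   |u_k| < q, so it vanishes. *)
Lemma remainder_eventually_periodic p q T : (1 <= q)%nat -> is_eperiod p q T ->
  exists M, remainder p q (M + T) = remainder p q M.
Proof.
  intros Hq [HT [N HN]]. set (Q := Z.of_nat q).
  set (M := Nat.max N 1). exists M.
  set (u := fun k => remainder p q (M + k + T) - remainder p q (M + k)).
  assert (Hgrow : forall k, u k = 3 ^ Z.of_nat k * u 0%nat).
  { induction k as [|k IH]; [rewrite Z.pow_0_r; ring|].
    assert (Hu : u (S k) = 3 * u k).
    { unfold u. replace (M + S k + T)%nat with (S (M + k + T)) by lia.
      replace (M + S k)%nat with (S (M + k)) by lia.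
      rewrite (proj1 (remainder_step p q (M + k + T) Hq)),
              (proj1 (remainder_step p q (M + k) Hq)).
      replace (S (M + k + T)) with (S (M + k) + T)%nat by lia.
      rewrite (HN (S (M + k))) by lia. ring. }
    rewrite Hu, IH, Nat2Z.inj_succ, Z.pow_succ_r by lia. ring. }
  assert (Hsmall : Z.abs (u q) < Q).
  { unfold u. pose proof (proj2 (remainder_step p q (M + q + T) Hq)).
    pose proof (proj2 (remainder_step p q (M + q) Hq)). lia. }
  assert (Hpow : Q < 3 ^ Z.of_nat q).
  { unfold Q. clear. induction q; [simpl; lia|].
    rewrite Nat2Z.inj_succ, Z.pow_succ_r by lia. lia. }
  assert (Hu0 : u 0%nat = 0).
  { rewrite Hgrow, Z.abs_mul, Z.abs_eq in Hsmall by (apply Z.pow_nonneg; lia). nia. }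
  unfold u in Hu0. rewrite !Nat.add_0_r in Hu0. lia.
Qed.

(* A reduced fraction p/q with eventual period T has q | 3^M (3^T - 1):
   q divides p 3^M (3^T - 1) = p 3^(M+T) - p 3^M and is coprime to p. *)
Lemma eperiod_denominator_divides p q T : (1 <= q)%nat -> Z.gcd p (Z.of_nat q) = 1 ->
  is_eperiod p q T -> exists M, Nat.divide q (3 ^ M * (3 ^ T - 1)).
Proof.
  intros Hq Hg HT. set (Q := Z.of_nat q). assert (HQ : 0 < Q) by lia.
  destruct (remainder_eventually_periodic p q T Hq HT) as [M HM]. exists M.
  unfold remainder in HM. fold Q in HM.
  set (A := p * 3 ^ Z.of_nat (M + T)) in *. set (B := p * 3 ^ Z.of_nat M) in *.
  assert (HD : (Q | A - B)).
  { exists (A / Q - B / Q). pose proof (Z.div_mod A Q ltac:(lia)).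
    pose proof (Z.div_mod B Q ltac:(lia)). lia. }
  assert (H3T : (1 <= 3 ^ T)%nat) by (apply Nat.pow_lower_bound; lia).
  assert (HV : Z.of_nat (3 ^ M * (3 ^ T - 1)) = 3 ^ Z.of_nat M * (3 ^ Z.of_nat T - 1)).
  { rewrite Nat2Z.inj_mul, Nat2Z.inj_sub, !Nat2Z.inj_pow by auto. reflexivity. }
  assert (HAB : A - B = p * Z.of_nat (3 ^ M * (3 ^ T - 1))).
  { rewrite HV. unfold A, B. rewrite Nat2Z.inj_add, Z.pow_add_r by lia. ring. }
  rewrite HAB in HD. apply Z.gauss in HD; [|rewrite Z.gcd_comm; auto].
  destruct HD as [k Hk]. fold Q in Hk.
  assert (0 <= k) by nia.
  exists (Z.to_nat k). apply Nat2Z.inj. rewrite (Nat2Z.inj_mul (Z.to_nat k)), Z2Nat.id by auto. lia.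
Qed.

(* If q < 3^n divides 3^M X, it already divides 3^n X: the 3-part of q is
   at most 3^n. *)
Lemma divide_drop_3_power q M X n : (1 <= q)%nat -> (q < 3 ^ n)%nat ->
  Nat.divide q (3 ^ M * X) -> Nat.divide q (3 ^ n * X).
Proof.
  intros Hq Hqn Hd.
  assert (H1 : Nat.divide q (Nat.gcd (3 ^ M * X) (q * X))).
  { apply Nat.gcd_greatest; auto. apply Nat.divide_factor_l. }
  rewrite Nat.gcd_mul_mono_r in H1.
  destruct (divide_prime_pow 3 M (Nat.gcd (3 ^ M) q) is_prime_3 (Nat.gcd_divide_l _ _))
    as [i [_ Hi]].
  rewrite Hi in H1.
  assert (3 ^ i <= q)%nat.
  { rewrite <- Hi. apply Nat.divide_pos_le; [lia|apply Nat.gcd_divide_r]. }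
  assert (i <= n)%nat.
  { destruct (le_lt_dec i n); auto.
    assert (3 ^ n < 3 ^ i)%nat by (apply Nat.pow_lt_mono_r; lia). lia. }
  eapply Nat.divide_trans; [apply H1|]. apply Nat.mul_divide_mono_r.
  exists (3 ^ (n - i))%nat. rewrite <- Nat.pow_add_r. f_equal. lia.
Qed.

Open Scope R_scope.

Lemma nat_above (r : R) : exists j : nat, (1 <= j)%nat /\ r <= INR j.
Proof.
  destruct (archimed r) as [Hup _]. exists (Z.to_nat (up r) + 1)%nat. split; [lia|].
  rewrite plus_INR. simpl (INR 1).
  destruct (Z_le_gt_dec 0 (up r)).
  - rewrite INR_IZR_INZ, Z2Nat.id by auto. lra.
  - replace (Z.to_nat (up r)) with 0%nat by lia. simpl.
    assert (IZR (up r) < 0) by (apply (IZR_lt _ 0); lia). lra.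
Qed.

(* log 3 < 2, so that log q < 2 n when q < 3^n. *)
Lemma ln3_lt_2 : ln 3 < 2.
Proof.
  rewrite <- (ln_exp 2). apply ln_increasing; [lra|].
  pose proof (exp_ineq1 2 ltac:(lra)). lra.
Qed.

(* Linear growth is dominated by any exponential: n <= c_eps 2^(n eps / 2),
   from 1 + x <= e^x. *)
Lemma linear_le_exp (n : nat) (eps : R) : 0 < eps ->
  INR n <= 2 / (eps * ln 2) * Rpower 2 (INR n * eps / 2).
Proof.
  intros He. pose proof ln_lt_2. pose proof (pos_INR n).
  assert (Hln2 : 0 < ln 2) by (rewrite <- ln_1; apply ln_increasing; lra).
  unfold Rpower. pose proof (exp_ineq1_le (INR n * eps / 2 * ln 2)).
  set (E := exp (INR n * eps / 2 * ln 2)) in *.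
  assert (Hc : 0 < eps * ln 2) by nra.
  apply (Rmult_le_reg_l (eps * ln 2)); auto.
  replace (eps * ln 2 * (2 / (eps * ln 2) * E)) with (2 * E) by (field; lra). nra.
Qed.

(* A period of a fraction with denominator q < 3^n, bounded by K log q, is at
   most k n for any integer k >= 2K (as log q < n log 3 < 2n). *)
Lemma period_le_linear (K : R) (k n q T : nat) : 2 * K <= INR k ->
  (1 <= q)%nat -> (q < 3 ^ n)%nat -> (1 <= T)%nat -> INR T <= K * ln (INR q) ->
  (T <= k * n)%nat.
Proof.
  intros Hk Hq Hqn HT HTK.
  assert (Hqr : 1 <= INR q) by (apply (le_INR 1); auto).
  assert (Hln0 : 0 <= ln (INR q)).
  { rewrite <- ln_1. destruct (Rle_lt_or_eq_dec 1 (INR q) Hqr) as [Hlt| <-];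
      [left; apply ln_increasing|right]; lra. }
  assert (Hln3 : 0 < ln 3) by (rewrite <- ln_1; apply ln_increasing; lra).
  assert (Hlnq : ln (INR q) < INR n * 2).
  { assert (INR q < 3 ^ n).
    { replace 3 with (INR 3) by (simpl; lra). rewrite <- pow_INR. apply lt_INR; auto. }
    assert (ln (INR q) < ln (3 ^ n)) by (apply ln_increasing; lra).
    rewrite ln_pow in * by lra. pose proof ln3_lt_2. pose proof (pos_INR n). nra. }
  assert (HT1 : 1 <= INR T) by (apply (le_INR 1); auto).
  assert (HKp : 0 < K) by nra.
  assert (HTkn : INR T < INR (k * n)) by (rewrite mult_INR; pose proof (pos_INR n); nra).
  apply INR_lt in HTkn. lia.
Qed.

Lemma pow3_ge_2 (T : nat) : (1 <= T)%nat -> (2 <= 3 ^ T)%nat.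
Proof. intros HT. pose proof (Nat.pow_le_mono_r 3 1 T ltac:(lia) HT). simpl in *. lia. Qed.

Definition denominators (n L : nat) : list nat :=
  flat_map (fun T => divisors (3 ^ n * (3 ^ T - 1))) (seq 1 L).

Lemma in_S_denominator (K : R) (k n : nat) (p : Z) (q : nat) :
  2 * K <= INR k -> in_S K n (p, q) -> In q (denominators n (k * n)).
Proof.
  intros Hk [_ [Hg [[Hq1 Hq2] [T [[HTp _] HTK]]]]].
  assert (Hq : (1 <= q)%nat)
    by (pose proof (Nat.pow_lower_bound 3 (n - 1) ltac:(lia)); lia).
  assert (HT1 : (1 <= T)%nat) by (destruct HTp; auto).
  destruct (eperiod_denominator_divides p q T Hq Hg HTp) as [M HM].
  pose proof (period_le_linear K k n q T Hk Hq Hq2 HT1 HTK).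
  apply in_flat_map. exists T. split; [apply in_seq; lia|].
  pose proof (pow3_ge_2 T HT1).
  pose proof (Nat.pow_lower_bound 3 n ltac:(lia)).
  apply in_divisors; [nia|]. split; [|auto].
  apply (divide_drop_3_power q M); auto.
Qed.

Definition prefix_code (n : nat) (x : Z * nat) (y : nat * list nat) : Prop :=
  snd x = fst y /\ exists a, cantor_digits a /\
    infinite_sum (fun i => INR (a (S i)) / 3 ^ S i) (IZR (fst x) / INR (snd x)) /\
    snd y = map a (seq 1 n).

Lemma S_length_le (K : R) (k n : nat) (l : list (Z * nat)) : 2 * K <= INR k ->
  NoDup l -> (forall x, In x l -> in_S K n x) ->
  (length l <= length (denominators n (k * n)) * 2 ^ n)%nat.
Proof.
  intros Hk Hnd Hl. rewrite <- digit_words_length, <- length_prod.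
  apply (length_le_of_injective_rel (prefix_code n)); auto.
  - intros [p q] Hx. pose proof (Hl _ Hx) as HS.
    destruct HS as [[a [Ha Hsum]] _].
    exists (q, map a (seq 1 n)). split; [|split; [auto|exists a; auto]].
    apply in_prod_iff. split; [eapply in_S_denominator; eauto|].
    apply in_digit_words; [rewrite length_map, length_seq; auto|].
    intros x Hx'. apply in_map_iff in Hx'. destruct Hx' as [i [<- _]]. auto.
  - intros [p q] [p' q'] [q0 w] Hx Hx' [E1 [a [Ha [Hs Hw]]]] [E2 [a' [Ha' [Hs' Hw']]]].
    simpl in *. subst q q' w.
    destruct (Hl _ Hx) as [_ [_ [[Hq1 Hq2] _]]].
    assert (Hq : (1 <= q0)%nat)
      by (pose proof (Nat.pow_lower_bound 3 (n - 1) ltac:(lia)); lia).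
    assert (Heq : forall i, (1 <= i <= n)%nat -> a i = a' i).
    { rewrite map_ext_in_iff in Hw'. intros i Hi. apply Hw', in_seq. lia. }
    pose proof (cantor_prefix_close a a' _ _ n Ha Ha' Heq Hs Hs') as Hc.
    rewrite (same_denominator_close_eq p p' q0 n Hq Hq2 Hc). auto.
Qed.

(* Each 3^n (3^T - 1) with T <= L is below 2^(2(n+L)), so a divisor bound
   d(M) <= C 2^(y/j) for M <= 2^y bounds the number of candidates. *)
Lemma denominators_length_le (n L j : nat) (C : R) :
  (forall (M : nat) (y : R), (1 <= M)%nat -> INR M <= Rpower 2 y ->
     INR (num_divisors M) <= C * Rpower 2 (y / INR j)) ->
  INR (length (denominators n L)) <= INR L * (C * Rpower 2 (INR (2 * (n + L)) / INR j)).
Proof.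
  intros Hd. unfold denominators. rewrite <- (length_seq L 1) at 2.
  apply length_flat_map_le. intros T HT. apply in_seq in HT.
  pose proof (pow3_ge_2 T ltac:(lia)).
  apply Hd; [pose proof (Nat.pow_lower_bound 3 n ltac:(lia)); nia|].
  rewrite Rpower_pow by lra. replace 2 with (INR 2) by reflexivity.
  rewrite <- pow_INR. apply le_INR.
  rewrite Nat.pow_mul_r, Nat.pow_add_r. simpl (2 ^ 2)%nat.
  apply Nat.mul_le_mono.
  - apply Nat.pow_le_mono_l. lia.
  - pose proof (Nat.pow_le_mono 3 T 4 L ltac:(lia) ltac:(lia) ltac:(lia)). lia.
Qed.

Lemma S_length_bound (K : R) (k n j : nat) (C : R) (l : list (Z * nat)) :
  2 * K <= INR k ->
  (forall (M : nat) (y : R), (1 <= M)%nat -> INR M <= Rpower 2 y ->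
     INR (num_divisors M) <= C * Rpower 2 (y / INR j)) ->
  NoDup l -> (forall x, In x l -> in_S K n x) ->
  INR (length l) <= INR k * INR n * C * Rpower 2 (INR (2 * (n + k * n)) / INR j) * 2 ^ n.
Proof.
  intros Hk Hd Hnd Hl.
  pose proof (le_INR _ _ (S_length_le K k n l Hk Hnd Hl)) as Hcount.
  rewrite mult_INR, pow_INR in Hcount. change (INR 2) with 2 in Hcount.
  pose proof (denominators_length_le n (k * n) j C Hd) as Hden.
  rewrite mult_INR in Hden.
  assert (H2n : 0 < 2 ^ n) by (apply pow_lt; lra).
  eapply Rle_trans; [apply Hcount|]. apply Rmult_le_compat_r; [lra|].
  eapply Rle_trans; [apply Hden|]. right; ring.
Qed.

Lemma divisor_factor_small (n k j : nat) (eps : R) : 0 < eps -> (1 <= j)%nat ->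
  4 * (INR k + 1) / eps <= INR j ->
  Rpower 2 (INR (2 * (n + k * n)) / INR j) <= Rpower 2 (INR n * eps / 2).
Proof.
  intros Heps Hj1 Hj. apply Rle_Rpower; [lra|].
  assert (Hj0 : 0 < INR j) by (apply (lt_INR 0); lia).
  assert (Hje : 4 * (INR k + 1) <= INR j * eps).
  { apply (Rmult_le_reg_r (/ eps)); [apply Rinv_0_lt_compat; lra|].
    replace (INR j * eps * / eps) with (INR j) by (field; lra). lra. }
  apply (Rmult_le_reg_r (INR j)); auto.
  replace (INR (2 * (n + k * n)) / INR j * INR j) with (INR (2 * (n + k * n)))
    by (field; lra).
  rewrite !mult_INR, plus_INR, mult_INR. simpl (INR 2).
  pose proof (pos_INR n). pose proof (pos_INR k). nra.
Qed.

Lemma Rpower2_split (n : nat) (eps : R) :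
  Rpower 2 (INR n * (1 + eps)) =
  Rpower 2 (INR n * eps / 2) * Rpower 2 (INR n * eps / 2) * 2 ^ n.
Proof.
  rewrite <- !Rpower_plus, <- Rpower_pow by lra. rewrite <- Rpower_plus.
  f_equal. field.
Qed.

(* Choose an integer k >= 2K bounding periods by k n and j >= 4(k+1)/eps so
   that the divisor bound costs 2^(n eps / 2); the factor n costs another
   2^(n eps / 2). *)
Theorem theorem5p2 :
  forall (K eps1 : R), 0 < eps1 ->
  exists (C : R) (N : nat), forall n : nat, (N <= n)%nat ->
    forall l : list (Z * nat), NoDup l -> (forall x, In x l -> in_S K n x) ->
      INR (length l) <= C * Rpower 2 (INR n * (1 + eps1)).
Proof.
  intros K eps Heps.
  destruct (nat_above (2 * K)) as [k [_ Hk]].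
  destruct (nat_above (4 * (INR k + 1) / eps)) as [j [Hj1 Hj]].
  destruct (num_divisors_le_root j Hj1) as [C [HC Hd]].
  exists (INR k * C * (2 / (eps * ln 2))), 0%nat.
  intros n _ l Hnd Hl.
  pose proof (S_length_bound K k n j C l Hk Hd Hnd Hl) as Hcount.
  pose proof (divisor_factor_small n k j eps Heps Hj1 Hj) as Hfactor.
  pose proof (linear_le_exp n eps Heps) as Hlin.
  rewrite Rpower2_split.
  set (E := Rpower 2 (INR n * eps / 2)) in *.
  set (R2 := Rpower 2 (INR (2 * (n + k * n)) / INR j)) in *.
  assert (HR2 : 0 < R2) by apply exp_pos.
  assert (H2n : 0 < 2 ^ n) by (apply pow_lt; lra).
  pose proof (pos_INR k). pose proof (pos_INR n).
  assert (Hkn : INR k * INR n <= INR k * (2 / (eps * ln 2) * E))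
    by (apply Rmult_le_compat_l; lra).
  eapply Rle_trans; [apply Hcount|].
  apply (Rle_trans _ (INR k * (2 / (eps * ln 2) * E) * C * E * 2 ^ n)); [|right; ring].
  apply Rmult_le_compat_r; [lra|]. apply Rmult_le_compat; try lra.
  - apply Rmult_le_pos; [apply Rmult_le_pos|]; lra.
  - apply Rmult_le_compat_r; lra.
Qed.
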